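(* Let $q$ be a prime power and $m>1$ an integer. Let $L_1(x),L_2(x)\in\mathbf{F}_q[x]$ be linearized polynomials, let $h(x)\in\mathbf{F}_q[x]$ and $\gamma\in\mathbf{F}_{q^m}$. Then $$F(x):=L_1(x)+\bigl(L_2(x)+\gamma\bigr)h\bigl(\mathrm{Tr}_{\mathbf{F}_{q^m}/\mathbf{F}_q}(x)\bigr)$$ is a permutation polynomial of $\mathbf{F}_{q^m}$ if and only if both of the following hold: (1) $L_1(x)+\bigl(L_2(x)+\mathrm{Tr}_{\mathbf{F}_{q^m}/\mathbf{F}_q}(\gamma)\bigr)h(x)\in\mathbf{F}_q[x]$ is a permutation polynomial of $\mathbf{F}_q$; (2) for every $y\in\mathbf{F}_q$, an element $x\in\mathbf{F}_{q^m}$ satisfies both $L_1(x)+L_2(x)h(y)=0$ and $\mathrm{Tr}_{\mathbf{F}_{q^m}/\mathbf{F}_q}(x)=0$ if and only if $x=0$.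
   Context: $\mathrm{Tr}_{\mathbf{F}_{q^m}/\mathbf{F}_q}(x)=x+x^q+\cdots+x^{q^{m-1}}$. A linearized polynomial with coefficients in $\mathbf{F}_q$ is a polynomial of the form $\sum_{i=0}^{m-1}a_i x^{q^i}$ with $a_i\in\mathbf{F}_q$. A permutation polynomial of a finite field $K$ is a polynomial inducing a bijection $K\to K$. *)

From HB Require Import structures.
From mathcomp Require Import all_boot all_order all_algebra all_field.
Set Implicit Arguments. Unset Strict Implicit. Unset Printing Implicit Defensive.
Import GRing.Theory.
Local Open Scope ring_scope.

(* K plays the role of F_{q^m}; the subfield F_q is the set of fixed
   points of x |-> x^q. *)
Definition subFq (K : finFieldType) (q : nat) : {set K} :=
  [set x : K | x ^+ q == x].

Definition trpoly (K : finFieldType) (q m : nat) : {poly K} :=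
  \sum_(i < m) 'X^(q ^ i).

Definition tr (K : finFieldType) (q m : nat) (x : K) : K :=
  \sum_(i < m) x ^+ (q ^ i).

Definition linpoly (K : finFieldType) (q m : nat) (a : 'I_m -> K) : {poly K} :=
  \sum_(i < m) a i *: 'X^(q ^ i).

Definition is_perm_poly (K : finFieldType) (p : {poly K}) : Prop :=
  bijective (fun x => p.[x]).

Definition is_perm_poly_on (K : finFieldType) (S : {set K}) (p : {poly K}) : Prop :=
  {in S, forall x, p.[x] \in S} /\ {in S &, injective (fun x => p.[x])}.

(* Write T for the trace.  Since L1, L2 and h have coefficients in F_q, the
   trace commutes with L1, L2 and with multiplication by h(T x), so
   T(F(x)) = G(T x) where G is the polynomial of condition (1).  As T maps
   F_{q^m} onto F_q, the map F permutes F_{q^m} only if G permutes F_q.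
   Moreover F(x0 + x) = F(x0) + L1(x) + L2(x) h(T x0) whenever T x = 0, so
   given condition (1), F is injective exactly on the fibres of T, i.e. exactly
   when condition (2) holds. *)

From HB Require Import structures.
From mathcomp Require Import all_boot all_order all_algebra all_field.
From mathcomp Require Import ring.

Set Implicit Arguments.
Unset Strict Implicit.
Unset Printing Implicit Defensive.
Import GRing.Theory.
Local Open Scope ring_scope.

Lemma card_le_mul_image_ker (U V : finZmodType) (f : U -> V) :
  {morph f : x y / x - y} ->
  (#|U| <= #|f @: [set: U]| * #|[set x | f x == 0%R]|)%N.
Proof.
move=> fB.
pose r v := odflt 0 [pick x | f x == v].
have frK x : f (r (f x)) = f x.
  by rewrite /r; case: pickP => [z /eqP //|/(_ x)]; rewrite eqxx.
pose g x := (f x, x - r (f x)).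
have g_inj : injective g.
  by move=> x1 x2 [e1 e2]; rewrite e1 in e2; exact: addIr e2.
rewrite -cardsT -(card_imset _ g_inj) -cardsX; apply: subset_leq_card.
apply/subsetP => _ /imsetP[x _ ->]; rewrite !inE /= fB frK subrr eqxx andbT.
exact: imset_f.
Qed.

Lemma card_root_lt_size (R : finIdomainType) (p : {poly R}) :
  p != 0 -> (#|[set x | root p x]| < size p)%N.
Proof.
move=> p_neq0; rewrite cardE; apply: max_poly_roots p_neq0 _ (enum_uniq _).
by apply/allP => x; rewrite mem_enum inE.
Qed.

Section Frobenius.

Variables (K : finFieldType) (q : nat).
Hypothesis q_pchar : [pchar K].-nat q.

Local Notation Fq := (subFq K q).

Lemma exprD_qpow n (x y : K) : (x + y) ^+ (q ^ n) = x ^+ (q ^ n) + y ^+ (q ^ n).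
Proof. by apply: exprDn_pchar; rewrite pnatX q_pchar. Qed.

Lemma expr0_qpow n : (0 : K) ^+ (q ^ n) = 0.
Proof.
by case/andP: q_pchar => q_gt0 _; rewrite expr0n expn_eq0 (negbTE (lt0n_neq0 q_gt0)).
Qed.

Lemma exprN_qpow n (x : K) : (- x) ^+ (q ^ n) = - x ^+ (q ^ n).
Proof. by apply/eqP; rewrite -addr_eq0 -exprD_qpow addrC subrr expr0_qpow. Qed.

Lemma expr_sum_qpow n (I : Type) (r : seq I) (P : pred I) (G : I -> K) :
  (\sum_(i <- r | P i) G i) ^+ (q ^ n) = \sum_(i <- r | P i) G i ^+ (q ^ n).
Proof. exact: (big_morph _ (exprD_qpow n) (expr0_qpow n)). Qed.

Lemma subFq_qpow n (x : K) : x \in Fq -> x ^+ (q ^ n) = x.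
Proof.
rewrite inE => /eqP xq; elim: n => [|n IHn]; first by rewrite expr1.
by rewrite expnSr exprM IHn xq.
Qed.

Lemma subFq0 : 0 \in Fq.
Proof. by rewrite inE -{1}(expn1 q) expr0_qpow. Qed.

Lemma subFqD x y : x \in Fq -> y \in Fq -> x + y \in Fq.
Proof. by rewrite !inE -(expn1 q) exprD_qpow => /eqP-> /eqP->. Qed.

Lemma subFqM x y : x \in Fq -> y \in Fq -> x * y \in Fq.
Proof. by rewrite !inE exprMn => /eqP-> /eqP->. Qed.

Lemma subFqX x n : x \in Fq -> x ^+ n \in Fq.
Proof. by rewrite !inE exprAC => /eqP->. Qed.

Lemma subFq_horner (p : {poly K}) y :
  (forall i, p`_i \in Fq) -> y \in Fq -> p.[y] \in Fq.
Proof.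
move=> p_Fq y_Fq; rewrite horner_coef.
apply: (big_ind (fun z => z \in Fq)); [exact: subFq0 | exact: subFqD |].
by move=> i _; apply: subFqM; [exact: p_Fq | exact: subFqX].
Qed.

Variable m : nat.
Local Notation T := (@tr K q m).

Lemma trD x y : T (x + y) = T x + T y.
Proof. by rewrite /tr -big_split; apply: eq_bigr => i _; rewrite exprD_qpow. Qed.

Lemma tr0 : T 0 = 0.
Proof. by rewrite /tr big1 // => i _; rewrite expr0_qpow. Qed.

Lemma trB x y : T (x - y) = T x - T y.
Proof.
by rewrite /tr -sumrB; apply: eq_bigr => i _; rewrite exprD_qpow exprN_qpow.
Qed.

Lemma tr_sum (I : Type) (r : seq I) (P : pred I) (G : I -> K) :
  T (\sum_(i <- r | P i) G i) = \sum_(i <- r | P i) T (G i).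
Proof. exact: (big_morph T trD tr0). Qed.

Lemma trZ c x : c \in Fq -> T (c * x) = c * T x.
Proof.
move=> c_Fq; rewrite /tr mulr_sumr; apply: eq_bigr => i _.
by rewrite exprMn (subFq_qpow _ c_Fq).
Qed.

Lemma horner_trpoly x : (trpoly K q m).[x] = T x.
Proof. by rewrite /trpoly horner_sum; apply: eq_bigr => i _; rewrite hornerXn. Qed.

Lemma horner_linpoly (a : 'I_m -> K) x :
  (linpoly q a).[x] = \sum_(i < m) a i * x ^+ (q ^ i).
Proof. by rewrite /linpoly horner_sum; apply: eq_bigr => i _; rewrite hornerZ hornerXn. Qed.

Lemma linpoly0 (a : 'I_m -> K) : (linpoly q a).[0] = 0.
Proof. by rewrite horner_linpoly big1 // => i _; rewrite expr0_qpow mulr0. Qed.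

Lemma linpolyD (a : 'I_m -> K) x y :
  (linpoly q a).[x + y] = (linpoly q a).[x] + (linpoly q a).[y].
Proof.
by rewrite !horner_linpoly -big_split; apply: eq_bigr => i _; rewrite exprD_qpow mulrDr.
Qed.

End Frobenius.

Section Trace.

Variables (K : finFieldType) (q m : nat).
Hypotheses (q_pchar : [pchar K].-nat q) (q_gt1 : (1 < q)%N).
Hypotheses (m_gt0 : (0 < m)%N) (cardK : #|K| = (q ^ m)%N).

Local Notation Fq := (subFq K q).
Local Notation T := (@tr K q m).

Lemma tr_subFq x : T x \in Fq.
Proof.
have x_qm : x ^+ (q ^ m) = x by rewrite -cardK expf_card.
rewrite inE -[X in _ ^+ X](expn1 q) /tr expr_sum_qpow // expn1.
case: m m_gt0 x_qm => // n _ x_qn.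
rewrite big_ord_recr big_ord_recl /= -exprM -expnSr x_qn addrC expn0 expr1.
by apply/eqP; congr (_ + _); apply: eq_bigr => i _; rewrite -exprM -expnSr.
Qed.

Lemma tr_qpow n x : T (x ^+ (q ^ n)) = T x.
Proof.
rewrite /tr -[RHS](subFq_qpow n (tr_subFq x)) expr_sum_qpow //.
by apply: eq_bigr => i _; rewrite exprAC.
Qed.

Lemma tr_linpoly (a : 'I_m -> K) x :
  (forall i, a i \in Fq) -> T (linpoly q a).[x] = (linpoly q a).[T x].
Proof.
move=> a_Fq; rewrite !horner_linpoly tr_sum //; apply: eq_bigr => i _.
by rewrite trZ // tr_qpow subFq_qpow // tr_subFq.
Qed.

Lemma card_subFq : (#|Fq| <= q)%N.
Proof.
have size_XqX : size ('X^q - 'X : {poly K}) = q.+1.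
  by rewrite size_polyDl size_polyXn // size_polyN size_polyX ltnS.
rewrite -ltnS -size_XqX (@eq_card _ _ [set x | root ('X^q - 'X) x]).
  by rewrite card_root_lt_size // -size_poly_eq0 size_XqX.
by move=> x; rewrite !inE rootE !hornerE subr_eq0.
Qed.

Lemma card_tr_ker : (#|[set x | T x == 0%R]| <= q ^ m.-1)%N.
Proof.
have size_trpoly : size (trpoly K q m) = (q ^ m.-1).+1.
  rewrite /trpoly; case: m m_gt0 => // n _.
  rewrite big_ord_recr /= addrC size_polyDl size_polyXn //.
  apply: leq_ltn_trans (size_sum _ _ _) _; rewrite ltnS.
  by apply/bigmax_leqP => i _; rewrite size_polyXn ltn_exp2l.
rewrite -ltnS -size_trpoly (@eq_card _ _ [set x | root (trpoly K q m) x]).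
  by rewrite card_root_lt_size // -size_poly_eq0 size_trpoly.
by move=> x; rewrite !inE rootE horner_trpoly.
Qed.

(* Counting: q^m <= #|image| * q^(m-1) forces #|image| >= q >= #|F_q|. *)
Lemma tr_surj y : y \in Fq -> exists x, T x = y.
Proof.
have tr_img_ge : (q <= #|T @: [set: K]|)%N.
  have := leq_trans (card_le_mul_image_ker (trB q_pchar m))
                    (leq_mul (leqnn _) card_tr_ker).
  rewrite cardK; case: m m_gt0 => // n _ /=.
  by rewrite expnS leq_pmul2r // expn_gt0 ltnW.
have img_sub : T @: [set: K] \subset Fq.
  by apply/subsetP => _ /imsetP[x _ ->]; exact: tr_subFq.
have /eqP img_eq : T @: [set: K] == Fq.
  by rewrite eqEcard img_sub (leq_trans card_subFq tr_img_ge).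
by rewrite -img_eq => /imsetP[x _ ->]; exists x.
Qed.

End Trace.

Lemma pchar_nat_prime_power (K : finFieldType) p k n :
  prime p -> #|K| = ((p ^ k) ^ n)%N -> [pchar K].-nat (p ^ k)%N.
Proof.
move=> p_prime cardK; rewrite -expnM in cardK.
have p_char := card_finPcharP cardK p_prime.
by rewrite pnatX (eq_pnat _ (pcharf_eq p_char)) pnat_id.
Qed.

Section PermutationCriterion.

Variables (K : finFieldType) (q m : nat).
Hypotheses (q_pchar : [pchar K].-nat q) (q_gt1 : (1 < q)%N).
Hypotheses (m_gt0 : (0 < m)%N) (cardK : #|K| = (q ^ m)%N).

Local Notation Fq := (subFq K q).
Local Notation T := (@tr K q m).

Variables (a1 a2 : 'I_m -> K) (h : {poly K}) (gamma : K).
Hypotheses (a1_Fq : forall i, a1 i \in Fq) (a2_Fq : forall i, a2 i \in Fq).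
Hypothesis h_Fq : forall i, h`_i \in Fq.

Local Notation L1 := (linpoly q a1).
Local Notation L2 := (linpoly q a2).
Local Notation F := (L1 + (L2 + gamma%:P) * (h \Po trpoly K q m)).
Local Notation G := (L1 + (L2 + (T gamma)%:P) * h).

Lemma hornerF x : F.[x] = L1.[x] + (L2.[x] + gamma) * h.[T x].
Proof. by rewrite hornerD hornerM hornerD hornerC horner_comp horner_trpoly. Qed.

Lemma tr_hornerF x : T F.[x] = G.[T x].
Proof.
have hTx_Fq : h.[T x] \in Fq by apply: subFq_horner; rewrite ?tr_subFq.
rewrite hornerF !hornerE trD // mulrC trZ // !trD // !tr_linpoly //.
by rewrite [_ * h.[_]]mulrC.
Qed.

Lemma hornerF_addr_tr0 x0 x :
  T x = 0 -> F.[x0 + x] = F.[x0] + (L1.[x] + L2.[x] * h.[T x0]).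
Proof. by move=> Tx0; rewrite !hornerF trD // Tx0 addr0 !linpolyD //; ring. Qed.

Lemma perm_on_subFq_of_injF :
  injective (fun x => F.[x]) -> is_perm_poly_on Fq G.
Proof.
move=> /injF_bij[Finv FK FinvK]; split.
  by move=> _ /(tr_surj q_pchar q_gt1 m_gt0 cardK)[x <-]; rewrite -tr_hornerF tr_subFq.
apply/imset_injP; rewrite eqn_leq leq_imset_card /=; apply: subset_leq_card.
apply/subsetP => _ /(tr_surj q_pchar q_gt1 m_gt0 cardK)[z <-].
by apply/imsetP; exists (T (Finv z)); rewrite ?tr_subFq // -tr_hornerF FinvK.
Qed.

Lemma tr_ker_trivial_of_injF : injective (fun x => F.[x]) ->
  forall y, y \in Fq ->
    forall x, (L1.[x] + L2.[x] * h.[y] = 0 /\ T x = 0) <-> x = 0.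
Proof.
move=> F_inj _ /(tr_surj q_pchar q_gt1 m_gt0 cardK)[x0 <-] x.
split=> [[ker_x Tx0] | ->]; last by rewrite !linpoly0 // mul0r addr0 tr0.
by apply: (addrI x0); apply: F_inj; rewrite /= hornerF_addr_tr0 // ker_x !addr0.
Qed.

Lemma injF_of_perm_on_subFq : is_perm_poly_on Fq G ->
  (forall y, y \in Fq ->
    forall x, (L1.[x] + L2.[x] * h.[y] = 0 /\ T x = 0) <-> x = 0) ->
  injective (fun x => F.[x]).
Proof.
move=> [_ G_inj] ker_trivial x1 x2 /= eqF.
have eqT : T x1 = T x2 by apply: G_inj; rewrite ?tr_subFq // -!tr_hornerF eqF.
have Tx12 : T (x1 - x2) = 0 by rewrite trB // eqT subrr.
apply/subr0_eq/(ker_trivial _ (tr_subFq q_pchar m_gt0 cardK x2)); split=> //.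
by apply: (addrI F.[x2]); rewrite -hornerF_addr_tr0 // subrKC eqF addr0.
Qed.

End PermutationCriterion.

Theorem corollary2p1 (K : finFieldType) (q m : nat)
  (hq : exists p k : nat, [/\ prime p, (0 < k)%N & q = (p ^ k)%N])
  (hm : (1 < m)%N) (hK : #|K| = (q ^ m)%N)
  (a1 a2 : 'I_m -> K)
  (ha1 : forall i, a1 i \in subFq K q) (ha2 : forall i, a2 i \in subFq K q)
  (h : {poly K}) (hh : forall i, h`_i \in subFq K q)
  (gamma : K) :
  let L1 := linpoly q a1 in
  let L2 := linpoly q a2 in
  is_perm_poly (L1 + (L2 + gamma%:P) * (h \Po trpoly K q m))
  <->
  (is_perm_poly_on (subFq K q) (L1 + (L2 + (tr q m gamma)%:P) * h)
   /\ forall y, y \in subFq K q ->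
        forall x : K, (L1.[x] + L2.[x] * h.[y] = 0 /\ tr q m x = 0) <-> x = 0).
Proof.
move=> L1 L2; rewrite {}/L1 {}/L2.
have [p [k [p_prime k_gt0 q_def]]] := hq.
have q_pchar : [pchar K].-nat q.
  by rewrite q_def in hK *; exact: pchar_nat_prime_power p_prime hK.
have q_gt1 : (1 < q)%N.
  rewrite q_def; apply: leq_trans (prime_gt1 p_prime) _.
  by rewrite -{1}(expn1 p) leq_pexp2l // prime_gt0.
have m_gt0 := ltnW hm.
split=> [/bij_inj F_inj | [G_perm ker_trivial]].
  split; first exact (perm_on_subFq_of_injF q_pchar q_gt1 m_gt0 hK ha1 ha2 hh F_inj).
  exact (tr_ker_trivial_of_injF q_pchar q_gt1 m_gt0 hK F_inj).
exact/injF_bij/(injF_of_perm_on_subFq q_pchar m_gt0 hK ha1 ha2 hh G_perm ker_trivial).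
Qed.
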